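(* Let $L$ be a non-trivial pseudocomplemented de Morgan algebra with dual $pm$-space $P$. Then $L\in\mathbf{M}_0$ if and only if, for every order component $Q$ of $P$, the subset $Q\cup\zeta(Q)$, with the induced order and $\zeta$, is isomorphic to one of $Q_0,Q_1,Q_2$.
   Context: $\mathbf{M}_0$ is the variety of regular $pm$-algebras of range $0$, i.e. pseudocomplemented de Morgan algebras $(L;\wedge,\vee,{}^\ast,{}^\prime,0,1)$ satisfying $x\wedge x^{\prime\ast\prime}\le y\vee y^\ast$ and $x\wedge x^{\prime\ast}=(x\wedge x^{\prime\ast})^{\prime\ast}$. The dual $pm$-space is the Priestley space $(P;\tau,\le)$ of prime ideals with involution $\zeta(I)=\{a:a'\notin I\}$. An order component is a maximal subset of $P$ connected in the comparability graph of $(P;\le)$. The ordered sets with involution: $Q_0$ is a single point $x$ with $\zeta(x)=x$; $Q_1$ consists of two incomparable points $x,\zeta(x)$ interchanged by $\zeta$; $Q_2$ is a two-element chain $x<\zeta(x)$ with $\zeta$ interchanging them. *)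

From HB Require Import structures.
From mathcomp Require Import all_boot all_order.
Set Implicit Arguments. Unset Strict Implicit. Unset Printing Implicit Defensive.
Import Order.TTheory.
Local Open Scope order_scope.

Section PM.
Context {disp : Order.disp_t} {L : tbDistrLatticeType disp}.

Definition is_pm_algebra (neg star : L -> L) : Prop :=
  (forall x : L, neg (neg x) = x) /\
  (forall x y : L, neg (x `|` y) = neg x `&` neg y) /\
  (forall x y : L, (x `&` y == \bot) = (y <= star x)).

Definition in_M0 (neg star : L -> L) : Prop :=
  (forall x y : L, x `&` neg (star (neg x)) <= y `|` star y) /\
  (forall x : L, x `&` star (neg x) = star (neg (x `&` star (neg x)))).

Definition subset (I J : L -> Prop) : Prop := forall a, I a -> J a.

Definition prime_ideal (I : L -> Prop) : Prop :=
  (exists a, I a) /\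
  (forall a b, I b -> a <= b -> I a) /\
  (forall a b, I a -> I b -> I (a `|` b)) /\
  ~ I \top /\
  (forall a b, I (a `&` b) -> I a \/ I b).

Definition zeta (neg : L -> L) (I : L -> Prop) : L -> Prop :=
  fun a => ~ I (neg a).

Definition comparable (I J : L -> Prop) : Prop := subset I J \/ subset J I.

Inductive conn_in (Q : (L -> Prop) -> Prop) (I : L -> Prop) : (L -> Prop) -> Prop :=
  | conn_refl : Q I -> conn_in Q I I
  | conn_step : forall K J, conn_in Q I K -> Q J -> comparable K J -> conn_in Q I J.

Definition connected_subset (Q : (L -> Prop) -> Prop) : Prop :=
  forall I J, Q I -> Q J -> conn_in Q I J.

Definition order_component (Q : (L -> Prop) -> Prop) : Prop :=
  (forall I, Q I -> prime_ideal I) /\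
  (exists I, Q I) /\
  connected_subset Q /\
  (forall Q' : (L -> Prop) -> Prop,
      (forall I, Q' I -> prime_ideal I) ->
      (forall I, Q I -> Q' I) -> connected_subset Q' ->
      forall I, Q' I -> Q I).

Definition Q_union_zetaQ (neg : L -> L) (Q : (L -> Prop) -> Prop) (I : L -> Prop) : Prop :=
  Q I \/ exists J, Q J /\ I = zeta neg J.

Definition iso_to (neg : L -> L) (S : (L -> Prop) -> Prop)
  (T : Type) (leT : T -> T -> Prop) (invT : T -> T) : Prop :=
  exists f : T -> (L -> Prop),
    (forall t, S (f t)) /\
    (forall t t', f t = f t' -> t = t') /\
    (forall I, S I -> exists t, I = f t) /\
    (forall t t', subset (f t) (f t') <-> leT t t') /\
    (forall t, zeta neg (f t) = f (invT t)).

End PM.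

Definition Q0_le (x y : unit) : Prop := True.
Definition Q0_inv (x : unit) : unit := x.
Definition Q1_le (x y : bool) : Prop := x = y.
Definition Q1_inv (x : bool) : bool := negb x.
Definition Q2_le (x y : bool) : Prop := implb x y.
Definition Q2_inv (x : bool) : bool := negb x.

From Pilot Require Import Defs.
From HB Require Import structures.
From mathcomp Require Import all_boot all_order.
From mathcomp Require classical_sets.
From Stdlib Require Import Classical FunctionalExtensionality PropExtensionality.
Set Implicit Arguments. Unset Strict Implicit. Unset Printing Implicit Defensive.
Import Order.TTheory.
Local Open Scope order_scope.

(* Both sides are equivalent to the rigidity of comparable primes: whenever
   I and J are comparable prime ideals, J = I or J = zeta(I).  Given M_0, the
   first identity forbids chains of three primes, so the smaller of two
   comparable primes is minimal, and the second identity then makes the larger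
   one equal to zeta of the smaller.  Conversely, rigidity yields both
   identities by separating elements with prime ideals (prime ideal theorem).
   An order component is connected through comparable pairs, hence under
   rigidity Q u zeta(Q) = {I, zeta(I)}, and the three possible relations
   between I and zeta(I) give Q_0, Q_1 and Q_2. *)

Section PrimeIdealTheorem.
Context {disp : Order.disp_t} {L : tbDistrLatticeType disp}.
Variables (F : L -> Prop) (d : L).
Hypotheses (F_nonempty : exists f, F f)
  (F_meet : forall f g, F f -> F g -> F (f `&` g))
  (F_not_le : forall f, F f -> ~ f <= d).

(* The last clause admits the empty set, which Zorn's lemma needs as the union
   of the empty chain, while forcing [d] into every nonempty candidate. *)
Definition avoiding (X : L -> Prop) : Prop :=
  (forall a b, X b -> a <= b -> X a) /\
  (forall a b, X a -> X b -> X (a `|` b)) /\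
  (forall f, F f -> ~ X f) /\
  (forall z, X z -> X d).

Lemma avoiding_bigcup (G : (L -> Prop) -> Prop) :
  (forall X, G X -> avoiding X) ->
  classical_sets.total_on G classical_sets.subset ->
  avoiding (classical_sets.bigcup G id).
Proof.
move=> GP Gtot; split; [|split; [|split]].
- move=> a b [X GX Xb] ab; exists X => //; exact: (proj1 (GP _ GX)) _ _ Xb ab.
- move=> a b [X GX Xa] [Y GY Yb].
  case: (Gtot _ _ GX GY) => [XY|YX].
  + by exists Y => //; apply: (proj1 (proj2 (GP _ GY))) => //; exact: XY.
  + by exists X => //; apply: (proj1 (proj2 (GP _ GX))) => //; exact: YX.
- by move=> f Ff [X GX Xf]; exact: (proj1 (proj2 (proj2 (GP _ GX)))) _ Ff Xf.
- by move=> z [X GX Xz]; exists X => //; exact: (proj2 (proj2 (proj2 (GP _ GX)))) _ Xz.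
Qed.

Section Maximal.
Variable A : L -> Prop.
Hypotheses (A_avoiding : avoiding A)
  (A_max : forall B, classical_sets.proper A B -> ~ avoiding B).

Let A_down : forall a b, A b -> a <= b -> A a := proj1 A_avoiding.
Let A_join : forall a b, A a -> A b -> A (a `|` b) := proj1 (proj2 A_avoiding).
Let A_avoids : forall f, F f -> ~ A f := proj1 (proj2 (proj2 A_avoiding)).

Lemma avoiding_max_mem : A d.
Proof.
apply: NNPP => nAd; apply: (A_max (B := fun z => z <= d)).
- by split; [move=> z /(proj2 (proj2 (proj2 A_avoiding))) | move=> /(_ d (lexx d))].
- split; [|split; [|split]].
  + by move=> a b bd ab; exact: le_trans ab bd.
  + by move=> a b ad bd; rewrite leUx ad bd.
  + by move=> f Ff fd; exact: F_not_le Ff fd.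
  + by [].
Qed.

(* The ideal generated by [A] and [c] must meet [F]. *)
Lemma avoiding_max_extend c : ~ A c ->
  exists f, F f /\ exists i, A i /\ f <= i `|` c.
Proof.
move=> nAc; apply: NNPP => Hno.
apply: (A_max (B := fun z => exists i, A i /\ z <= i `|` c)).
- split; first by move=> z Az; exists z; split => //; exact: leUl.
  by move=> H; apply: nAc; apply: H; exists d; split; [exact: avoiding_max_mem | exact: leUr].
- split; [|split; [|split]].
  + by move=> x y [i [Ai yi]] xy; exists i; split => //; exact: le_trans xy yi.
  + move=> x y [i [Ai xi]] [j [Aj yj]]; exists (i `|` j); split; first exact: A_join.
    by rewrite leUx (le_trans xi) ?(le_trans yj) // leU2 // ?leUl ?leUr.
  + by move=> f Ff Xf; apply: Hno; exists f.
  + by move=> z _; exists d; split; [exact: avoiding_max_mem | exact: leUl].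
Qed.

Lemma avoiding_max_prime : prime_ideal A.
Proof.
split; first by exists d; exact: avoiding_max_mem.
split; first exact: A_down.
split; first exact: A_join.
split; first by case: F_nonempty => f Ff At; apply: (A_avoids Ff); exact: A_down At (lex1 f).
move=> a b Aab; apply: NNPP => /not_or_and [/avoiding_max_extend [f1 [Ff1 [i1 [Ai1 h1]]]]
                                           /avoiding_max_extend [f2 [Ff2 [i2 [Ai2 h2]]]]].
apply: (A_avoids (F_meet Ff1 Ff2)).
apply: (A_down (b := (i1 `|` i2) `|` (a `&` b))); first by apply: A_join => //; apply: A_join.
rewrite joinIr; apply: leI2.
- by apply: le_trans h1 _; rewrite leU2 // leUl.
- by apply: le_trans h2 _; rewrite leU2 // leUr.
Qed.

End Maximal.

Theorem prime_ideal_separation :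
  exists I, prime_ideal I /\ I d /\ forall f, F f -> ~ I f.
Proof.
have [A [avA maxA]] := classical_sets.Zorn_bigcup avoiding_bigcup.
exists A; split; first exact: avoiding_max_prime.
split; first exact: avoiding_max_mem.
by case: avA => _ [_ []].
Qed.

End PrimeIdealTheorem.

Lemma prime_separation {disp : Order.disp_t} {L : tbDistrLatticeType disp} (a b : L) :
  ~ a <= b -> exists I, prime_ideal I /\ I b /\ ~ I a.
Proof.
move=> nab; have [|||I [HI [Ib Ia]]] := @prime_ideal_separation _ L (fun z => a <= z) b.
- by exists a.
- by move=> f g af ag; rewrite lexI af ag.
- by move=> f af fb; apply: nab; exact: le_trans af fb.
by exists I; split => //; split => //; apply: Ia.
Qed.

Section PrimeIdeals.
Context {disp : Order.disp_t} {L : tbDistrLatticeType disp}.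
Variable I : L -> Prop.
Hypothesis HI : prime_ideal I.

Lemma prime_down a b : I b -> a <= b -> I a. Proof. by case: HI => _ [h _]; apply: h. Qed.
Lemma prime_join a b : I a -> I b -> I (a `|` b). Proof. by case: HI => _ [_ [h _]]; apply: h. Qed.
Lemma prime_ntop : ~ I \top. Proof. by case: HI => _ [_ [_ []]]. Qed.
Lemma prime_meet a b : I (a `&` b) -> I a \/ I b. Proof. by case: HI => _ [_ [_ [_ h]]]; apply: h. Qed.

Lemma prime_bot : I \bot.
Proof. by case: HI => [[a Ia] _]; exact: prime_down Ia (le0x a). Qed.

End PrimeIdeals.

Section Components.
Context {disp : Order.disp_t} {L : tbDistrLatticeType disp}.
Implicit Types (Q R : (L -> Prop) -> Prop) (A B C : L -> Prop).

Lemma conn_in_mem Q A B : conn_in Q A B -> Q B.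
Proof. by case. Qed.

Lemma conn_in_trans Q A B C : conn_in Q A B -> conn_in Q B C -> conn_in Q A C.
Proof. by move=> AB; elim=> [//|K J _ AK QJ KJ]; exact: conn_step AK QJ KJ. Qed.

Lemma conn_in_sym Q A B : conn_in Q A B -> conn_in Q B A.
Proof.
elim=> [QA|K J AK KA QJ KJ]; first exact: conn_refl.
apply: conn_in_trans KA; apply: conn_step (conn_refl QJ) (conn_in_mem AK) _.
by case: KJ; [right | left].
Qed.

Lemma conn_in_sub Q R A B : (forall I, Q I -> R I) -> conn_in Q A B -> conn_in R A B.
Proof.
move=> QR; elim=> [QA|K J _ AK QJ KJ]; first exact/conn_refl/QR.
exact: conn_step AK (QR _ QJ) KJ.
Qed.

Lemma conn_in_self Q A B : conn_in Q A B -> conn_in (conn_in Q A) A B.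
Proof.
elim=> [QA|K J AK IH QJ KJ]; first exact/conn_refl/conn_refl.
exact: conn_step IH (conn_step AK QJ KJ) KJ.
Qed.

Lemma order_component_conn_in (I : L -> Prop) : prime_ideal I ->
  order_component (conn_in prime_ideal I).
Proof.
move=> HI; split; first by move=> J /conn_in_mem.
split; first by exists I; exact: conn_refl.
split.
  by move=> A B IA IB; exact: conn_in_trans (conn_in_sym (conn_in_self IA)) (conn_in_self IB).
move=> R RP sub con J RJ.
exact: conn_in_sub RP (con I J (sub _ (conn_refl HI)) RJ).
Qed.

End Components.

Section PMAlgebra.
Context {disp : Order.disp_t} {L : tbDistrLatticeType disp}.
Variables (neg star : L -> L).
Hypothesis HL : is_pm_algebra neg star.
Implicit Types (I J K N : L -> Prop) (a b c x y : L).

Local Notation zeta := (zeta neg).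

Lemma pred_ext (A B : L -> Prop) : Defs.subset A B -> Defs.subset B A -> A = B.
Proof.
move=> AB BA; apply: functional_extensionality => a.
by apply: propositional_extensionality; split; [apply: AB | apply: BA].
Qed.

Lemma negK x : neg (neg x) = x. Proof. by case: HL. Qed.
Lemma negU x y : neg (x `|` y) = neg x `&` neg y. Proof. by case: HL => _ []. Qed.
Lemma le_star x y : (y <= star x) = (x `&` y == \bot). Proof. by case: HL => _ [_ ->]. Qed.

Lemma negI x y : neg (x `&` y) = neg x `|` neg y.
Proof. by rewrite -{1}(negK x) -{1}(negK y) -negU negK. Qed.

Lemma neg_le x y : x <= y -> neg y <= neg x.
Proof. by move/join_idPr => <-; rewrite negU leIl. Qed.

Lemma neg0 : neg \bot = \top.
Proof. by apply/eqP; rewrite eq_le lex1 -{1}(negK \top) neg_le ?le0x. Qed.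

Lemma neg1 : neg \top = \bot.
Proof. by rewrite -neg0 negK. Qed.

Lemma meet_star x : x `&` star x = \bot.
Proof. by apply/eqP; rewrite -le_star. Qed.

Lemma prime_star I x : prime_ideal I -> ~ I x -> I (star x).
Proof.
move=> HI nIx; have := prime_bot HI; rewrite -(meet_star x).
by case/(prime_meet HI).
Qed.

Lemma zetaE I a : zeta I a = ~ I (neg a). Proof. by []. Qed.

Lemma zetaK I : zeta (zeta I) = I.
Proof. by apply: pred_ext => a; rewrite !zetaE negK; [exact: NNPP | move=> Ia; apply]. Qed.

Lemma zeta_sub I J : Defs.subset I J -> Defs.subset (zeta J) (zeta I).
Proof. by move=> IJ a nJ Ia; apply: nJ; apply: IJ. Qed.

Lemma zeta_prime I : prime_ideal I -> prime_ideal (zeta I).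
Proof.
move=> HI; split; first by exists \bot; rewrite zetaE neg0; exact: prime_ntop.
split; first by move=> a b nIb ab Ia; apply: nIb; apply: prime_down Ia _ => //; exact: neg_le.
split; first by move=> a b nIa nIb; rewrite zetaE negU => /(prime_meet HI) [].
split; first by rewrite zetaE neg1 => nIbot; apply: nIbot; exact: prime_bot.
move=> a b; rewrite zetaE negI => nIab.
by apply: NNPP => /not_or_and [/NNPP Ia /NNPP Ib]; apply: nIab; apply: prime_join.
Qed.

Lemma zeta_star_neg I x : prime_ideal I -> I x -> zeta I (star (neg x)).
Proof. by move=> HI Ix; apply: prime_star; [exact: zeta_prime | rewrite zetaE negK]. Qed.

(* Separate [\bot] from the filter generated by [c] and the complement of [J]. *)
Lemma prime_sub_notin_of_star J c : prime_ideal J -> J (star c) ->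
  exists N, prime_ideal N /\ Defs.subset N J /\ ~ N c.
Proof.
move=> HJ Jc.
have [|||N [HN [_ Ndis]]] :=
  @prime_ideal_separation _ L (fun z => exists j, ~ J j /\ c `&` j <= z) \bot.
- by exists (c `&` \top), \top; split; [exact: prime_ntop|].
- move=> f g [j1 [nJj1 h1]] [j2 [nJj2 h2]]; exists (j1 `&` j2); split.
    by case/(prime_meet HJ).
  by apply: le_trans (leI2 h1 h2); rewrite lexI !leI2 ?leIl ?leIr.
- move=> f [j [nJj h]] fb; apply: nJj; apply: prime_down Jc _ => //.
  by rewrite le_star eq_le le0x (le_trans h fb).
exists N; split => //; split.
- move=> a Na; apply: NNPP => nJa; apply: (Ndis (c `&` a)); first by exists a.
  exact: prime_down Na (leIr _ _).
- by apply: Ndis; exists \top; split; [exact: prime_ntop | exact: leIl].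
Qed.

Lemma prime_sup_mem I x : prime_ideal I -> ~ I (neg (star (neg x))) ->
  exists K, prime_ideal K /\ Defs.subset I K /\ K x.
Proof.
move=> HI nI.
have [N [HN [NzI nN]]] := prime_sub_notin_of_star (zeta_prime HI) nI.
exists (zeta N); split; first exact: zeta_prime.
split; last by rewrite zetaE.
by move=> a Ia; rewrite zetaE => /NzI; rewrite zetaE negK.
Qed.

Lemma star_neg_le_meet_star_neg x : star (neg (x `&` star (neg x))) <= x `&` star (neg x).
Proof.
apply: NNPP => /prime_separation [I [HI [It nIst]]]; apply: nIst.
case: (prime_meet HI It) => [Ix|Ist].
- apply: prime_star => //.
  by apply: prime_down (zeta_star_neg HI Ix) _; [exact: zeta_prime | exact: leIr].
- have [N [HN [NI nN]]] := prime_sub_notin_of_star HI Ist.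
  apply: NI; apply: prime_star => //.
  by apply: prime_down (_ : zeta N x) _; [exact: zeta_prime | | exact: leIl].
Qed.

Definition comparable_eq_or_zeta : Prop :=
  forall I N, prime_ideal I -> prime_ideal N -> Defs.comparable I N ->
  N = I \/ N = zeta I.

Section M0Comparable.
Hypothesis HM : in_M0 neg star.

Lemma no_prime_chain3 N J K x y :
  prime_ideal N -> prime_ideal J -> prime_ideal K ->
  Defs.subset N J -> Defs.subset J K -> ~ N y -> J y -> ~ J x -> K x -> False.
Proof.
move=> HN HJ HK NJ JK nNy Jy nJx Kx.
have Jy_star : J (y `|` star y) by apply: prime_join => //; apply: NJ; exact: prime_star.
have : J (x `&` neg (star (neg x))) by apply: prime_down Jy_star _; case: HM.
case/(prime_meet HJ) => [//|/JK].
by have := zeta_star_neg HK Kx.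
Qed.

Lemma minimal_mem_or_zeta J x : prime_ideal J ->
  (forall N, prime_ideal N -> Defs.subset N J -> Defs.subset J N) ->
  zeta J (star (neg x)) -> J x \/ zeta J x.
Proof.
move=> HJ Jmin zJ.
have zJt : zeta J (x `&` star (neg x)) by apply: prime_down zJ _; [exact: zeta_prime | exact: leIr].
have : J (x `&` star (neg x)) by rewrite (proj2 HM x); exact: prime_star.
case/(prime_meet HJ) => [|Jst]; first by left.
have [N [HN [NJ nN]]] := prime_sub_notin_of_star HJ Jst.
by right => Jn; apply: nN; apply: Jmin Jn.
Qed.

(* By [no_prime_chain3], a prime properly below another one is minimal. *)
Lemma prime_proper_sub_zeta J K a : prime_ideal J -> prime_ideal K ->
  Defs.subset J K -> K a -> ~ J a -> Defs.subset K (zeta J).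
Proof.
move=> HJ HK JK Ka nJa.
have Jmin N : prime_ideal N -> Defs.subset N J -> Defs.subset J N.
  move=> HN NJ y Jy; apply: NNPP => nNy.
  exact: no_prime_chain3 HN HJ HK NJ JK nNy Jy nJa Ka.
move=> x Kx; apply: NNPP => nzx.
have zJ : zeta J (star (neg (a `|` x))).
  by apply: (zeta_sub JK); exact: zeta_star_neg HK (prime_join HK Ka Kx).
case: (minimal_mem_or_zeta HJ Jmin zJ) => [Jax|zax].
- by apply: nJa; apply: prime_down Jax (leUl _ _).
- by apply: nzx; apply: prime_down zax _; [exact: zeta_prime | exact: leUr].
Qed.

Lemma prime_proper_sup_eq_zeta J K a : prime_ideal J -> prime_ideal K ->
  Defs.subset J K -> K a -> ~ J a -> K = zeta J.
Proof.
move=> HJ HK JK Ka nJa; apply: pred_ext; first exact: prime_proper_sub_zeta HJ HK JK Ka nJa.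
have := prime_proper_sub_zeta (zeta_prime HK) (zeta_prime HJ) (zeta_sub JK) (a := neg a).
by rewrite zetaK !zetaE negK; apply.
Qed.

Lemma M0_comparable_eq_or_zeta : comparable_eq_or_zeta.
Proof.
have sub_case J K : prime_ideal J -> prime_ideal K -> Defs.subset J K ->
    K = J \/ K = zeta J.
  move=> HJ HK JK; case: (classic (exists a, K a /\ ~ J a)) => [[a [Ka nJa]]|nKJ].
    by right; exact: prime_proper_sup_eq_zeta HJ HK JK Ka nJa.
  by left; apply: pred_ext => // a Ka; apply: NNPP => nJa; apply: nKJ; exists a.
move=> I N HI HN [IN|NI]; first exact: sub_case.
by case: (sub_case N I HN HI NI) => ->; [left | right; rewrite zetaK].
Qed.

End M0Comparable.

Section ComparableM0.
Hypothesis HC : comparable_eq_or_zeta.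

Lemma sub_zeta_eq_or_zeta I N : prime_ideal I -> prime_ideal N ->
  Defs.subset N (zeta I) -> N = I \/ N = zeta I.
Proof.
move=> HI HN NzI.
have : Defs.comparable I (zeta N) by left; rewrite -(zetaK I); exact: zeta_sub.
case/(HC HI (zeta_prime HN)) => /(congr1 zeta); rewrite !zetaK => ->; by [right | left].
Qed.

Lemma meet_neg_star_le_join_star x y : x `&` neg (star (neg x)) <= y `|` star y.
Proof.
apply: NNPP => /prime_separation [I [HI [Iy nIx]]].
have [N [HN [NI nNy]]] := prime_sub_notin_of_star HI (prime_down HI Iy (leUr _ _)).
have [K [HK [IK Kx]]] : exists K, prime_ideal K /\ Defs.subset I K /\ K x.
  by apply: prime_sup_mem => // Ix; apply: nIx; exact: prime_down Ix (leIr _ _).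
case: (HC HI HN (or_intror NI)) => eN.
  by apply: nNy; rewrite eN; exact: prime_down Iy (leUl _ _).
case: (HC HI HK (or_introl IK)) => eK.
  by rewrite eK in Kx; apply: nIx; exact: (prime_down HI Kx (leIl x _)).
by apply: nNy; rewrite eN -eK; apply: IK; exact: prime_down Iy (leUl _ _).
Qed.

Lemma meet_star_neg_le x : x `&` star (neg x) <= star (neg (x `&` star (neg x))).
Proof.
apply: NNPP => /prime_separation [I [HI [Ist nIt]]]; apply: nIt.
have [N [HN [NI nN]]] := prime_sub_notin_of_star HI Ist.
case: (HC HI HN (or_intror NI)) => eN; last first.
  by move: nN; rewrite eN zetaE negK => /NNPP.
subst N; case: (prime_meet (zeta_prime HI) nN) => [zIx|zIst].
  by apply: prime_down (prime_star HI zIx) (leIr _ _).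
have [M [HM [MzI nM]]] := prime_sub_notin_of_star (zeta_prime HI) zIst.
case: (sub_zeta_eq_or_zeta HI HM MzI) => eM; subst M.
  by apply: prime_down (prime_star HI nM) (leIr _ _).
by move: nM; rewrite zetaE negK => /NNPP Ix; exact: prime_down Ix (leIl _ _).
Qed.

Lemma comparable_M0 : in_M0 neg star.
Proof.
split; first exact: meet_neg_star_le_join_star.
by move=> x; apply: le_anti; rewrite meet_star_neg_le star_neg_le_meet_star_neg.
Qed.

End ComparableM0.

Definition shape_Q012 (S : (L -> Prop) -> Prop) : Prop :=
  iso_to neg S Q0_le Q0_inv \/ iso_to neg S Q1_le Q1_inv \/ iso_to neg S Q2_le Q2_inv.

Lemma shape_Q012_eq_or_zeta S A B : shape_Q012 S -> S A -> S B -> B = A \/ B = zeta A.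
Proof.
move=> [|[]] [f [_ [_ [onto [_ fzeta]]]]] /onto [t ->] /onto [t' ->].
- by case: t; case: t'; left.
- by rewrite fzeta; case: t; case: t'; [left|right|right|left].
- by rewrite fzeta; case: t; case: t'; [left|right|right|left].
Qed.

Lemma iso_to_zeta_pair S A (leT : bool -> bool -> Prop) :
  S A -> S (zeta A) -> (forall B, S B -> B = A \/ B = zeta A) -> zeta A <> A ->
  (forall t, leT t t) ->
  (Defs.subset A (zeta A) <-> leT false true) ->
  (Defs.subset (zeta A) A <-> leT true false) ->
  iso_to neg S leT negb.
Proof.
move=> SA SzA onto nzA leTT le_ft le_tf.
exists (fun t : bool => if t then zeta A else A).
split; first by case.
split; first by case; case => // eA; case: nzA; first [exact: eA | exact: esym eA].
split; first by move=> B /onto [->|->]; [exists false | exists true].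
split; last by case; rewrite ?zetaK.
by case; case => //; split=> // _ a.
Qed.

Lemma shape_Q012_zeta_pair S A :
  S A -> S (zeta A) -> (forall B, S B -> B = A \/ B = zeta A) -> shape_Q012 S.
Proof.
move=> SA SzA onto.
case: (classic (zeta A = A)) => [zA|nzA].
  left; exists (fun _ => A); split=> [_ //|]; split; first by case; case.
  split; first by move=> B /onto [] ->; exists tt.
  by split=> *; first split=> *.
case: (classic (Defs.subset A (zeta A))) => [AzA|nAzA].
  right; right; apply: (iso_to_zeta_pair (A := A)) => //; first by case.
  by split=> // zAA; case: nzA; apply: pred_ext.
case: (classic (Defs.subset (zeta A) A)) => [zAA|nzAA].
  right; right; apply: (iso_to_zeta_pair (A := zeta A)); rewrite ?zetaK //.
  - by move=> B /onto [] ->; [right | left].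
  - by move=> e; apply: nzA; rewrite -e.
  - by case.
by right; left; apply: (iso_to_zeta_pair (A := A)).
Qed.

Section ComparableShapes.
Hypothesis HC : comparable_eq_or_zeta.

Lemma conn_in_eq_or_zeta Q A B : (forall I, Q I -> prime_ideal I) ->
  conn_in Q A B -> B = A \/ B = zeta A.
Proof.
move=> QP; elim=> [_|K J AK IH QJ KJ]; first by left.
case: (HC (QP _ (conn_in_mem AK)) (QP _ QJ) KJ) => ->; first exact: IH.
by case: IH => ->; [right | left; rewrite zetaK].
Qed.

Lemma comparable_shape_Q012 Q : order_component Q -> shape_Q012 (Q_union_zetaQ neg Q).
Proof.
move=> [QP [[A QA] [con _]]].
apply: (@shape_Q012_zeta_pair _ A); [by left | by right; exists A |].
move=> B [QB|[J [QJ ->]]]; first exact: conn_in_eq_or_zeta QP (con _ _ QA QB).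
by case: (conn_in_eq_or_zeta QP (con _ _ QA QJ)) => ->; [right | left; rewrite zetaK].
Qed.

End ComparableShapes.

Lemma shape_Q012_comparable :
  (forall Q, order_component Q -> shape_Q012 (Q_union_zetaQ neg Q)) -> comparable_eq_or_zeta.
Proof.
move=> HS I N HI HN IN; apply: (shape_Q012_eq_or_zeta (HS _ (order_component_conn_in HI))).
- by left; exact: conn_refl.
- by left; exact: conn_step (conn_refl HI) HN IN.
Qed.

End PMAlgebra.

Theorem theorem4p4 (disp : Order.disp_t) (L : tbDistrLatticeType disp)
  (neg star : L -> L) (HL : is_pm_algebra neg star)
  (Hnontriv : (\bot : L) != \top) :
  in_M0 neg star <->
  (forall Q : (L -> Prop) -> Prop, order_component Q ->
     iso_to neg (Q_union_zetaQ neg Q) Q0_le Q0_inv \/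
     iso_to neg (Q_union_zetaQ neg Q) Q1_le Q1_inv \/
     iso_to neg (Q_union_zetaQ neg Q) Q2_le Q2_inv).
Proof.
split=> [HM Q HQ | HS].
- exact: (comparable_shape_Q012 HL (M0_comparable_eq_or_zeta HL HM) HQ).
- exact: (comparable_M0 HL (shape_Q012_comparable HS)).
Qed.
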